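(* Let $\beta\in\mathbb{N}=\{0,1,2,\dots\}$ and $\alpha\in\mathbb{D}\setminus\{0\}$. Let $\phi_\alpha(z)=\dfrac{\alpha-z}{1-\overline{\alpha}z}$ and, for each non-negative integer $n$, let $v_n:=C_{\phi_\alpha}^*z^n$, where $C_{\phi_\alpha}f=f\circ\phi_\alpha$ acts on $A^2_\beta$ and $^*$ denotes the adjoint in $A^2_\beta$. Then $\langle v_n,v_m\rangle=0$ whenever $|n-m|\ge\beta+3$.
   Context: $\mathbb{D}$ is the open unit disc. For $\beta>-1$, $A^2_\beta$ is the Hilbert space of analytic functions $f(z)=\sum_{n\ge0}\widehat f(n)z^n$ on $\mathbb{D}$ with inner product $\langle f,g\rangle=\sum_{n\ge0}\frac{n!\,\Gamma(2+\beta)}{\Gamma(n+2+\beta)}\widehat f(n)\overline{\widehat g(n)}$ (equivalently the $L^2$ inner product with respect to $(\beta+1)(1-|z|^2)^\beta dA(z)$). *)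

From Stdlib Require Import Reals.
From Coquelicot Require Import Coquelicot.
Open Scope R_scope.

(* Sum of a complex series, computed componentwise (Coquelicot's Series is real). *)
Definition CSeries (u : nat -> C) : C :=
  (Series (fun k => Re (u k)), Series (fun k => Im (u k))).

(* Weight n! Gamma(2+beta) / Gamma(n+2+beta) for beta in N:
   = n! (beta+1)! / (n+beta+1)!. *)
Definition wt (beta n : nat) : R :=
  INR (Factorial.fact n) * INR (Factorial.fact (beta + 1)) / INR (Factorial.fact (n + beta + 1)).

(* An element of A^2_beta, represented by its Taylor coefficient sequence. *)
Definition inA2 (beta : nat) (a : nat -> C) : Prop :=
  ex_series (fun n => wt beta n * (Cmod (a n)) ^ 2).

Definition ip (beta : nat) (a b : nat -> C) : C :=
  CSeries (fun n => Cmult (RtoC (wt beta n)) (Cmult (a n) (Cconj (b n)))).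

Definition eval (a : nat -> C) (z : C) : C :=
  CSeries (fun n => Cmult (a n) (@pow_n C_Ring z n)).

Definition mono (n : nat) : nat -> C :=
  fun k => if Nat.eqb k n then RtoC 1 else RtoC 0.

Definition phi (alpha z : C) : C :=
  Cdiv (Cminus alpha z) (Cminus (RtoC 1) (Cmult (Cconj alpha) z)).

(* v is C_{phi_alpha}^* h in A^2_beta: <f, v> = <C_phi f, h> for all f in A^2_beta,
   where C_phi f is the element g of A^2_beta with g = f o phi_alpha on the disc. *)
Definition is_adj_comp (beta : nat) (alpha : C) (h v : nat -> C) : Prop :=
  inA2 beta v /\
  forall f g : nat -> C, inA2 beta f -> inA2 beta g ->
    (forall z : C, Cmod z < 1 -> eval g z = eval f (phi alpha z)) ->
    ip beta f v = ip beta g h.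

(* By the reproducing property of K_w(z) = (1 - conj(w) z)^-(β+2) in A^2_β,
   v_n(w) = conj <K_w, v_n> = conj <K_w ∘ φ_α, z^n>, i.e. v_n(w) is w_n times the
   conjugate of the n-th Taylor coefficient of K_w ∘ φ_α (w_n the weight of z^n).
   The identity
     1 - conj(w) φ_α(z) = (1 - conj(w) α) (1 - conj(φ_α w) z) / (1 - conj(α) z)
   shows that K_w ∘ φ_α is a constant times (1 - conj(α) z)^(β+2) K_(φ_α w).
   Putting w = φ_α(z) and using φ_α ∘ φ_α = id gives
   v_n ∘ φ_α = c (1 - conj(α) z)^(β+2) p_n(z), where p_n(z), the n-th coefficient of
   (1 - α X)^(β+2) (1 - z X)^-(β+2), only involves z^j with n - β - 2 <= j <= n.
   So C_(φ_α) v_n is a polynomial with monomials z^j, |j - n| <= β + 2, and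
   <v_n, v_m> = <C_(φ_α) v_n, z^m> = w_m (its m-th coefficient) vanishes
   when |n - m| >= β + 3. *)

From Stdlib Require Import Reals Lra Lia.
From Coquelicot Require Import Coquelicot.
Open Scope R_scope.

(** * Negative binomial coefficients *)

Definition negbin (k j : nat) : R := Binomial.C (j + k) j.

Lemma negbin_pos k j : 0 < negbin k j.
Proof.
  unfold negbin, Binomial.C.
  pose proof (INR_fact_lt_0 (j + k)); pose proof (INR_fact_lt_0 j);
  pose proof (INR_fact_lt_0 (j + k - j)).
  apply Rdiv_lt_0_compat; [|apply Rmult_lt_0_compat]; assumption.
Qed.

Lemma negbin_0r k : negbin k 0 = 1.
Proof.
  unfold negbin, Binomial.C; rewrite Nat.sub_0_r; simpl.
  pose proof (INR_fact_lt_0 k); field; lra.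
Qed.

Lemma negbin_0l j : negbin 0 j = 1.
Proof.
  unfold negbin, Binomial.C; rewrite Nat.add_0_r, Nat.sub_diag; simpl.
  pose proof (INR_fact_lt_0 j); field; lra.
Qed.

Lemma negbin_SS k j : negbin (S k) (S j) = negbin (S k) j + negbin k (S j).
Proof.
  unfold negbin.
  replace (S j + S k)%nat with (S (j + S k)) by lia.
  replace (S j + k)%nat with (j + S k)%nat by lia.
  rewrite <- Binomial.pascal by lia; reflexivity.
Qed.

Lemma wt_negbin beta j : wt beta j * negbin (beta + 1) j = 1.
Proof.
  unfold wt, negbin, Binomial.C.
  replace (j + (beta + 1) - j)%nat with (beta + 1)%nat by lia.
  replace (j + (beta + 1))%nat with (j + beta + 1)%nat by lia.
  pose proof (INR_fact_lt_0 j); pose proof (INR_fact_lt_0 (beta + 1));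
  pose proof (INR_fact_lt_0 (j + beta + 1)).
  field; lra.
Qed.

Lemma wt_pos beta j : 0 < wt beta j.
Proof.
  unfold wt; pose proof (INR_fact_lt_0 j); pose proof (INR_fact_lt_0 (beta + 1)).
  pose proof (INR_fact_lt_0 (j + beta + 1)).
  apply Rdiv_lt_0_compat; [apply Rmult_lt_0_compat|]; assumption.
Qed.

Lemma wt_S_le beta j : wt beta (S j) <= wt beta j.
Proof.
  pose proof (wt_negbin beta j); pose proof (wt_negbin beta (S j)).
  pose proof (wt_pos beta j); pose proof (wt_pos beta (S j)).
  assert (negbin (beta + 1) j <= negbin (beta + 1) (S j)).
  { replace (beta + 1)%nat with (S beta) by lia; rewrite negbin_SS.
    pose proof (negbin_pos beta (S j)); lra. }
  assert (wt beta (S j) * negbin (beta + 1) j <= wt beta j * negbin (beta + 1) j)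
    by nra.
  pose proof (negbin_pos (beta + 1) j).
  apply (Rmult_le_reg_r (negbin (beta + 1) j)); assumption.
Qed.

Lemma negbin_psum_R k r J :
  (1 - r) * sum_n (fun j => negbin (S k) j * r ^ j) J =
  sum_n (fun j => negbin k j * r ^ j) J - negbin (S k) J * r ^ S J.
Proof.
  induction J as [|J IH].
  - rewrite !sum_O, !negbin_0r; simpl; ring.
  - rewrite !sum_Sn; change plus with Rplus.
    rewrite Rmult_plus_distr_l, IH, negbin_SS; simpl; ring.
Qed.

Lemma ex_series_negbin_R k r : 0 <= r < 1 -> ex_series (fun j => negbin k j * r ^ j).
Proof.
  intros Hr.
  assert (Hterm : forall k j n, 0 <= negbin k j * r ^ n).
  { intros; apply Rmult_le_pos; [left; apply negbin_pos | apply pow_le; lra]. }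
  assert (Hincr : forall k J, sum_n (fun j => negbin k j * r ^ j) J
                              <= sum_n (fun j => negbin k j * r ^ j) (S J)).
  { intros k' J; rewrite sum_Sn; specialize (Hterm k' (S J) (S J)).
    change plus with Rplus; lra. }
  induction k as [|k [L HL]].
  - apply (ex_series_ext (fun j => r ^ j)).
    + intro j; now rewrite negbin_0l, Rmult_1_l.
    + apply ex_series_geom; rewrite Rabs_pos_eq; lra.
  - destruct (ex_finite_lim_seq_incr (sum_n (fun j => negbin (S k) j * r ^ j)) (L / (1 - r)))
      as [l Hl]; [apply Hincr| |exists l; exact Hl].
    intro J; apply Rle_div_r; [lra|]; rewrite Rmult_comm, negbin_psum_R.
    pose proof (is_lim_seq_incr_compare (sum_n (fun j => negbin k j * r ^ j)) L HL
                  (Hincr k) J).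
    pose proof (Hterm (S k) J (S J)); lra.
Qed.

(** * Complex power series *)

Local Open Scope C_scope.

Notation Cis := (@is_series C_AbsRing C_NormedModule).

Lemma Cis_ext (a b : nat -> C) l : (forall n, a n = b n) -> Cis a l -> Cis b l.
Proof. apply is_series_ext. Qed.

Lemma Cis_scal c (a : nat -> C) l : Cis a l -> Cis (fun n => c * a n) (c * l).
Proof. exact (is_series_scal c a l). Qed.

Lemma sum_n_Re (a : nat -> C) n : sum_n (fun k => Re (a k)) n = Re (sum_n a n).
Proof. induction n; [rewrite !sum_O | rewrite !sum_Sn, IHn]; reflexivity. Qed.

Lemma sum_n_Im (a : nat -> C) n : sum_n (fun k => Im (a k)) n = Im (sum_n a n).
Proof. induction n; [rewrite !sum_O | rewrite !sum_Sn, IHn]; reflexivity. Qed.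

Lemma CSeries_unique (a : nat -> C) l : Cis a l -> CSeries a = l.
Proof.
  intros H.
  assert (Hball := proj1 (@filterlim_locally _ C_UniformSpace _ _ _ _) H).
  assert (HRe : is_series (fun k => Re (a k)) (Re l)).
  { apply (filterlim_ext (fun n => Re (sum_n a n))); [intro; symmetry; apply sum_n_Re|].
    apply filterlim_locally; intros eps.
    apply (filter_imp _ _ (fun n (Hn : ball l eps (sum_n a n)) => proj1 Hn)), Hball. }
  assert (HIm : is_series (fun k => Im (a k)) (Im l)).
  { apply (filterlim_ext (fun n => Im (sum_n a n))); [intro; symmetry; apply sum_n_Im|].
    apply filterlim_locally; intros eps.
    apply (filter_imp _ _ (fun n (Hn : ball l eps (sum_n a n)) => proj2 Hn)), Hball. }
  unfold CSeries; rewrite (is_series_unique _ _ HRe), (is_series_unique _ _ HIm).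
  destruct l; reflexivity.
Qed.

Lemma CSeries_ext (a b : nat -> C) : (forall n, a n = b n) -> CSeries a = CSeries b.
Proof. intros H; unfold CSeries; f_equal; apply Series_ext; intro n; rewrite H; reflexivity. Qed.

Lemma CSeries_conj (a : nat -> C) : CSeries (fun n => Cconj (a n)) = Cconj (CSeries a).
Proof. unfold CSeries, Cconj; simpl; f_equal; rewrite <- Series_opp; reflexivity. Qed.

Lemma sum_n_eventually_const {G : AbelianMonoid} (a : nat -> G) M n :
  (forall j, (M < j)%nat -> a j = zero) -> (M <= n)%nat -> sum_n a n = sum_n a M.
Proof.
  intros Ha Hn; induction Hn as [|n Hn IH]; [reflexivity|].
  rewrite sum_Sn, IH, Ha by lia; apply plus_zero_r.
Qed.

Lemma is_series_finite {K : AbsRing} {V : NormedModule K} (a : nat -> V) M :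
  (forall j, (M < j)%nat -> a j = zero) -> is_series a (sum_n a M).
Proof.
  intros Ha; apply filterlim_locally; intros eps; exists M; intros n Hn.
  rewrite (sum_n_eventually_const a M n Ha Hn); apply ball_center.
Qed.

Lemma sum_n_last {G : AbelianMonoid} (a : nat -> G) m :
  (forall j, (j < m)%nat -> a j = zero) -> sum_n a m = a m.
Proof.
  intros Ha.
  assert (H0 : forall n, (n < m)%nat -> sum_n a n = zero).
  { induction n; intros Hn; [rewrite sum_O; apply Ha; lia|].
    rewrite sum_Sn, IHn, Ha by lia; apply plus_zero_r. }
  destruct m as [|m]; [apply sum_O|].
  rewrite sum_Sn, H0 by lia; apply plus_zero_l.
Qed.

Lemma is_series_poly (s : nat -> C) z M :
  (forall j, (M < j)%nat -> s j = 0) ->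
  Cis (fun j => s j * z ^ j) (sum_n (fun j => s j * z ^ j) M).
Proof.
  intros Hs; apply (is_series_finite (K := C_AbsRing) (V := C_NormedModule)).
  intros j Hj; rewrite Hs by exact Hj; apply Cmult_0_l.
Qed.

Lemma is_series_single (a : nat -> C) m : (forall j, j <> m -> a j = 0) -> Cis a (a m).
Proof.
  intros Ha; rewrite <- (sum_n_last a m (fun j Hj => Ha j ltac:(lia))).
  exact (is_series_finite (K := C_AbsRing) (V := C_NormedModule) a m
           (fun j Hj => Ha j ltac:(lia))).
Qed.

Lemma is_lim_Cmod_le (e : nat -> C) (b : nat -> R) :
  (forall n, Cmod (e n) <= b n) -> is_lim_seq b 0 -> filterlim e eventually (locally (RtoC 0)).
Proof.
  intros Hb Hlim; apply (proj2 (@filterlim_locally_ball_norm C_AbsRing _ C_NormedModule _ _ _ _)).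
  intros eps; apply is_lim_seq_spec in Hlim.
  specialize (Hlim eps); revert Hlim; apply filter_imp; intros n Hn.
  unfold ball_norm; change (Cmod (e n - 0) < eps).
  replace (e n - 0) with (e n) by ring; specialize (Hb n); rewrite Rminus_0_r in Hn.
  pose proof (Rle_abs (b n)); lra.
Qed.

Lemma Cmod_mult_lt_1 (x y : C) : Cmod x < 1 -> Cmod y < 1 -> Cmod (x * y) < 1.
Proof.
  intros Hx Hy; rewrite Cmod_mult.
  pose proof (Cmod_ge_0 x); pose proof (Cmod_ge_0 y); nra.
Qed.

Lemma RtoC_conj r : Cconj (RtoC r) = r.
Proof. unfold Cconj, RtoC; simpl; rewrite Ropp_0; reflexivity. Qed.

Lemma one_sub_neq0 (x : C) : Cmod x < 1 -> 1 - x <> 0.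
Proof.
  intros Hx E; replace x with (RtoC 1) in Hx by (rewrite <- (Cplus_0_r x), <- E; ring).
  rewrite Cmod_1 in Hx; lra.
Qed.

Lemma is_series_div_1_sub (x : C) (a b e : nat -> C) l :
  1 - x <> 0 -> Cis a l ->
  (forall J, (1 - x) * sum_n b J = sum_n a J - e J) ->
  filterlim e eventually (locally (RtoC 0)) -> Cis b (l / (1 - x)).
Proof.
  intros Hx Ha Hb He.
  apply (filterlim_ext (fun J => scal (/ (1 - x)) (plus (sum_n a J) (opp (e J))))).
  { intro J; change (/ (1 - x) * (sum_n a J - e J) = sum_n b J).
    rewrite <- Hb; field; exact Hx. }
  replace (l / (1 - x)) with (scal (/ (1 - x)) (plus l (opp (RtoC 0))))
    by (change (/ (1 - x) * (l - 0) = l / (1 - x)); field; exact Hx).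
  eapply filterlim_comp; [|exact (filterlim_scal_r (K := C_AbsRing) (V := C_NormedModule) _ _)].
  eapply filterlim_comp_2;
    [exact Ha| |exact (filterlim_plus (K := C_AbsRing) (V := C_NormedModule) _ _)].
  eapply filterlim_comp; [exact He|exact (filterlim_opp (K := C_AbsRing) (V := C_NormedModule) _)].
Qed.

Definition negbin_seq (k : nat) (x : C) (j : nat) : C := negbin k j * x ^ j.

Lemma sum_n_mono0 J : sum_n (mono 0) J = RtoC 1.
Proof.
  induction J as [|J IH]; [rewrite sum_O; reflexivity|].
  rewrite sum_Sn, IH; change (1 + 0 = RtoC 1); ring.
Qed.

Lemma negbin_psum0 (x : C) J :
  (1 - x) * sum_n (negbin_seq 0 x) J = sum_n (mono 0) J - negbin 0 J * x ^ S J.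
Proof.
  rewrite sum_n_mono0; induction J as [|J IH].
  - rewrite sum_O; unfold negbin_seq; rewrite !negbin_0l; simpl; ring.
  - rewrite sum_Sn; change plus with Cplus; rewrite Cmult_plus_distr_l, IH.
    unfold negbin_seq; rewrite !negbin_0l; simpl; ring.
Qed.

Lemma negbin_psumS (x : C) k J :
  (1 - x) * sum_n (negbin_seq (S k) x) J
  = sum_n (negbin_seq k x) J - negbin (S k) J * x ^ S J.
Proof.
  induction J as [|J IH].
  - rewrite !sum_O; unfold negbin_seq; rewrite !negbin_0r; simpl; ring.
  - rewrite !sum_Sn; change plus with Cplus; rewrite Cmult_plus_distr_l, IH.
    unfold negbin_seq; rewrite negbin_SS, RtoC_plus; simpl; ring.
Qed.

Lemma negbin_tail_lim k (x : C) :
  Cmod x < 1 -> filterlim (fun J => negbin k J * x ^ S J) eventually (locally (RtoC 0)).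
Proof.
  intros Hx; pose proof (Cmod_ge_0 x).
  apply (is_lim_Cmod_le _ (fun J => (negbin k J * Cmod x ^ J)%R)).
  - intro J; rewrite Cmod_mult, Cmod_R, Cmod_pow, Rabs_pos_eq by (left; apply negbin_pos).
    apply Rmult_le_compat_l; [left; apply negbin_pos|]; simpl.
    pose proof (pow_le (Cmod x) J H); nra.
  - apply ex_series_lim_0, ex_series_negbin_R; lra.
Qed.

Lemma is_series_negbin_seq k (x : C) :
  Cmod x < 1 -> Cis (negbin_seq k x) (/ (1 - x) ^ S k).
Proof.
  intros Hx; pose proof (one_sub_neq0 x Hx) as Hx'.
  induction k as [|k IH].
  - replace (/ (1 - x) ^ 1) with (1 / (1 - x)) by (simpl; field; exact Hx').
    apply (is_series_div_1_sub x (mono 0) _ (fun J => negbin 0 J * x ^ S J)); auto.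
    + apply (is_series_single (mono 0) 0); intros j Hj.
      unfold mono; destruct (Nat.eqb_spec j 0); [lia|reflexivity].
    + apply negbin_psum0.
    + apply negbin_tail_lim; exact Hx.
  - replace (/ (1 - x) ^ S (S k)) with (/ (1 - x) ^ S k / (1 - x))
      by (rewrite (Cpow_S _ (S k)); field; split; [apply Cpow_nz|]; exact Hx').
    apply (is_series_div_1_sub x (negbin_seq k x) _ (fun J => negbin (S k) J * x ^ S J)); auto.
    + apply negbin_psumS.
    + apply negbin_tail_lim; exact Hx.
Qed.

(** * Multiplication of a power series by [(1 - g z) ^ N] *)

Definition mul_1_sub (g : C) (s : nat -> C) (j : nat) : C :=
  match j with O => s O | S i => s (S i) - g * s i end.

Definition mul_1_sub_pow (g : C) (N : nat) (s : nat -> C) : nat -> C :=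
  Nat.iter N (mul_1_sub g) s.

Definition coef_1_sub_pow (g : C) (N : nat) : nat -> C := mul_1_sub_pow g N (mono 0).

Lemma is_series_mul_1_sub g s (z l : C) :
  Cis (fun j => s j * z ^ j) l ->
  Cis (fun j => mul_1_sub g s j * z ^ j) ((1 - g * z) * l).
Proof.
  intros Hs.
  set (shifted := fun j => match j with O => RtoC 0 | S i => s i * z ^ i end).
  assert (Hsh : Cis shifted l).
  { apply is_series_decr_1.
    match goal with |- is_series _ ?v => replace v with l by (change (l = l + - 0); ring) end.
    exact Hs. }
  apply (is_series_ext (fun j => s j * z ^ j - (g * z) * shifted j)).
  - intros [|j]; simpl; ring.
  - replace ((1 - g * z) * l) with (l - (g * z) * l) by ring.
    apply (is_series_minus _ _ _ _ Hs (is_series_scal (g * z) _ _ Hsh)).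
Qed.

Lemma is_series_mul_1_sub_pow g N s (z l : C) :
  Cis (fun j => s j * z ^ j) l ->
  Cis (fun j => mul_1_sub_pow g N s j * z ^ j) ((1 - g * z) ^ N * l).
Proof.
  intros Hs; induction N as [|N IH].
  - replace ((1 - g * z) ^ 0 * l) with l by (simpl; ring); exact Hs.
  - replace ((1 - g * z) ^ S N * l) with ((1 - g * z) * ((1 - g * z) ^ N * l))
      by (simpl; ring).
    apply is_series_mul_1_sub, IH.
Qed.

Lemma mul_1_sub_pow_ext g N s t :
  (forall i, s i = t i) -> forall j, mul_1_sub_pow g N s j = mul_1_sub_pow g N t j.
Proof.
  intros Hst; induction N as [|N IH]; intros [|j]; simpl; rewrite ?IH; auto.
Qed.

Lemma Cconj_mul_1_sub_pow g N s j :
  Cconj (mul_1_sub_pow g N s j) = mul_1_sub_pow (Cconj g) N (fun i => Cconj (s i)) j.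
Proof.
  revert j; induction N as [|N IH]; intros [|j]; simpl; rewrite ?IH; auto.
  rewrite Cminus_conj, Cmult_conj, !IH; reflexivity.
Qed.

Lemma mul_1_sub_pow_support g N (s : nat -> C) lo hi :
  (forall j, (j < lo)%nat \/ (hi < j)%nat -> s j = 0) ->
  forall j, (j < lo)%nat \/ (hi + N < j)%nat -> mul_1_sub_pow g N s j = 0.
Proof.
  intros Hs; induction N as [|N IH]; intros j Hj.
  - apply Hs; lia.
  - destruct j as [|j]; simpl; change (Nat.iter N (mul_1_sub g) s) with (mul_1_sub_pow g N s).
    + apply IH; lia.
    + rewrite !IH by lia; ring.
Qed.

Lemma coef_1_sub_pow_support g N k : (N < k)%nat -> coef_1_sub_pow g N k = 0.
Proof.
  intros Hk; apply (mul_1_sub_pow_support g N (mono 0) 0 0); [|lia].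
  intros j Hj; unfold mono; destruct (Nat.eqb_spec j 0); [lia | reflexivity].
Qed.

Lemma sum_n_sub_scal (a b : nat -> C) c n :
  sum_n (fun j => a j - c * b j) n = sum_n a n - c * sum_n b n.
Proof.
  induction n as [|n IH]; [rewrite !sum_O; reflexivity|].
  rewrite !sum_Sn, IH; change plus with Cplus.
  match goal with |- ?x = ?y => change (@eq C x y) end; ring.
Qed.

Lemma mul_1_sub_pow_conv g N s n :
  mul_1_sub_pow g N s n = sum_n (fun j => coef_1_sub_pow g N (n - j) * s j) n.
Proof.
  revert n; induction N as [|N IH]; intros n.
  - rewrite sum_n_last; unfold coef_1_sub_pow, mono; simpl.
    + rewrite Nat.sub_diag; simpl; ring.
    + intros j Hj; destruct (Nat.eqb_spec (n - j) 0); [lia|]; apply Cmult_0_l.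
  - destruct n as [|n].
    + rewrite !sum_O; unfold coef_1_sub_pow; simpl.
      change (mul_1_sub_pow g N s 0 = mul_1_sub_pow g N (mono 0) 0 * s 0%nat).
      rewrite IH, sum_O; reflexivity.
    + change (mul_1_sub_pow g N s (S n) - g * mul_1_sub_pow g N s n
              = sum_n (fun j => mul_1_sub g (coef_1_sub_pow g N) (S n - j) * s j) (S n)).
      rewrite !IH, !sum_Sn, Nat.sub_diag.
      rewrite (sum_n_ext_loc (fun j => mul_1_sub g (coef_1_sub_pow g N) (S n - j) * s j)
                 (fun j => coef_1_sub_pow g N (S n - j) * s j
                           - g * (coef_1_sub_pow g N (n - j) * s j))).
      * rewrite sum_n_sub_scal; change plus with Cplus; simpl (mul_1_sub _ _ 0); ring.
      * intros j Hj; replace (S n - j)%nat with (S (n - j)) by lia; simpl; ring.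
Qed.

(** * Membership in [A^2_beta] and the reproducing kernel *)

Lemma inA2_finite beta (a : nat -> C) M :
  (forall j, (M < j)%nat -> a j = 0) -> inA2 beta a.
Proof.
  intros Ha; exists (sum_n (fun n => (wt beta n * Cmod (a n) ^ 2)%R) M).
  apply (is_series_finite (K := R_AbsRing) (V := R_NormedModule)); intros j Hj.
  rewrite Ha, Cmod_0 by exact Hj.
  change ((wt beta j * 0 ^ 2)%R = 0%R); ring.
Qed.

Lemma inA2_scal beta c a : inA2 beta a -> inA2 beta (fun j => c * a j).
Proof.
  intros [l Hl]; exists (Cmod c ^ 2 * l)%R.
  apply (is_series_ext (fun n => scal (Cmod c ^ 2)%R (wt beta n * Cmod (a n) ^ 2)%R)).
  - intro n; rewrite Cmod_mult; change scal with Rmult; simpl; ring.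
  - exact (is_series_scal _ _ _ Hl).
Qed.

Lemma Cmod_sub_sq_le (a b : C) : (Cmod (a - b) ^ 2 <= 2 * Cmod a ^ 2 + 2 * Cmod b ^ 2)%R.
Proof.
  pose proof (Cmod_triangle a (- b)) as Htri; rewrite Cmod_opp in Htri.
  pose proof (Cmod_ge_0 (a - b)); pose proof (Cmod_ge_0 a); pose proof (Cmod_ge_0 b).
  change (a + - b) with (a - b) in Htri.
  assert (Cmod (a - b) * Cmod (a - b) <= (Cmod a + Cmod b) * (Cmod a + Cmod b))%R
    by (apply Rmult_le_compat; lra).
  pose proof (Rle_0_sqr (Cmod a - Cmod b)); unfold Rsqr in *; simpl; nra.
Qed.

Lemma inA2_mul_1_sub beta g a : inA2 beta a -> inA2 beta (mul_1_sub g a).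
Proof.
  intros Ha.
  set (t := fun n => (wt beta n * Cmod (a n) ^ 2)%R).
  set (shifted := fun n => match n with O => 0%R | S i => t i end).
  assert (Ht : forall n, (0 <= t n)%R).
  { intro n; apply Rmult_le_pos; [left; apply wt_pos | apply pow2_ge_0]. }
  assert (Hsh : ex_series shifted) by (apply ex_series_incr_1, Ha).
  apply (@ex_series_le R_AbsRing R_CompleteNormedModule _
           (fun n => 2 * t n + 2 * Cmod g ^ 2 * shifted n)%R).
  - intros [|n]; change norm with Rabs;
      rewrite Rabs_pos_eq by (apply Rmult_le_pos; [left; apply wt_pos | apply pow2_ge_0]).
    + pose proof (Ht 0%nat); unfold t in *; simpl; lra.
    + simpl mul_1_sub; simpl shifted; unfold t.
      pose proof (Cmod_sub_sq_le (a (S n)) (g * a n)); rewrite Cmod_mult in H.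
      pose proof (wt_S_le beta n); pose proof (wt_pos beta (S n)).
      pose proof (pow2_ge_0 (Cmod (a n))); pose proof (pow2_ge_0 (Cmod g)).
      nra.
  - exact (ex_series_plus _ _ (ex_series_scal_l 2 t Ha)
                             (ex_series_scal_l (2 * Cmod g ^ 2)%R shifted Hsh)).
Qed.

Lemma inA2_mul_1_sub_pow beta g N a : inA2 beta a -> inA2 beta (mul_1_sub_pow g N a).
Proof. intros Ha; induction N as [|N IH]; [exact Ha | apply inA2_mul_1_sub, IH]. Qed.

Definition kernel (beta : nat) (w : C) : nat -> C := negbin_seq (beta + 1) (Cconj w).

Lemma Cconj_kernel beta w j : Cconj (kernel beta w j) = negbin_seq (beta + 1) w j.
Proof.
  unfold kernel, negbin_seq; rewrite Cmult_conj, RtoC_conj, Cpow_conj, Cconj_conj.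
  reflexivity.
Qed.

Lemma inA2_kernel beta w : Cmod w < 1 -> inA2 beta (kernel beta w).
Proof.
  intros Hw; pose proof (Cmod_ge_0 w).
  apply (ex_series_ext (fun j => negbin (beta + 1) j * (Cmod w ^ 2) ^ j)%R).
  - intro j; match goal with |- ?x = ?y => change (@eq R x y) end.
    unfold kernel, negbin_seq.
    rewrite Cmod_mult, Cmod_R, Cmod_pow, Cmod_conj, Rabs_pos_eq by (left; apply negbin_pos).
    rewrite <- pow_mult, Nat.mul_comm, pow_mult.
    transitivity ((wt beta j * negbin (beta + 1) j) * (negbin (beta + 1) j * (Cmod w ^ j) ^ 2))%R;
      [rewrite wt_negbin | ]; ring.
  - apply ex_series_negbin_R; split; [apply pow2_ge_0 | nra].
Qed.

Lemma pow_n_Cpow (z : C) n : @pow_n C_Ring z n = z ^ n.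
Proof. induction n as [|n IH]; [reflexivity | simpl; rewrite IH; reflexivity]. Qed.

Lemma eval_is_series (s : nat -> C) z l : Cis (fun j => s j * z ^ j) l -> eval s z = l.
Proof.
  intros Hs; apply CSeries_unique.
  refine (Cis_ext _ _ _ _ Hs); intro j; f_equal; symmetry; apply pow_n_Cpow.
Qed.

Lemma is_series_kernel beta w z :
  Cmod w < 1 -> Cmod z < 1 ->
  Cis (fun j => kernel beta w j * z ^ j) (/ (1 - Cconj w * z) ^ S (beta + 1)).
Proof.
  intros Hw Hz.
  assert (Hwz : Cmod (Cconj w * z) < 1) by (apply Cmod_mult_lt_1; rewrite ?Cmod_conj; auto).
  refine (Cis_ext _ _ _ _ (is_series_negbin_seq (beta + 1) _ Hwz)).
  intro j; unfold kernel, negbin_seq; rewrite Cpow_mult_l; ring.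
Qed.

Lemma ip_kernel beta w v : ip beta (kernel beta w) v = Cconj (eval v w).
Proof.
  unfold ip, eval; rewrite <- CSeries_conj; apply CSeries_ext; intro j.
  rewrite Cmult_conj, pow_n_Cpow, Cpow_conj; unfold kernel, negbin_seq.
  transitivity ((wt beta j * negbin (beta + 1) j)%R * (Cconj w ^ j * Cconj (v j)));
    [rewrite RtoC_mult | rewrite wt_negbin]; ring.
Qed.

Lemma ip_mono beta (g : nat -> C) m : ip beta g (mono m) = wt beta m * g m.
Proof.
  unfold ip; apply CSeries_unique.
  replace (wt beta m * g m) with (wt beta m * (g m * Cconj (mono m m))).
  - apply (is_series_single (fun n => wt beta n * (g n * Cconj (mono m n)))).
    intros j Hj; unfold mono; destruct (Nat.eqb_spec j m); [lia|].
    rewrite RtoC_conj; ring.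
  - unfold mono; rewrite Nat.eqb_refl, RtoC_conj; ring.
Qed.

(** * The disc automorphism [phi alpha] *)

Lemma one_sub_conj_mul_neq0 (alpha z : C) :
  Cmod alpha < 1 -> Cmod z < 1 -> 1 - Cconj alpha * z <> 0.
Proof.
  intros Ha Hz; apply one_sub_neq0, Cmod_mult_lt_1; rewrite ?Cmod_conj; assumption.
Qed.

Lemma phi_disc alpha z : Cmod alpha < 1 -> Cmod z < 1 -> Cmod (phi alpha z) < 1.
Proof.
  intros Ha Hz; pose proof (one_sub_conj_mul_neq0 alpha z Ha Hz) as Hd.
  unfold phi; rewrite Cmod_div by exact Hd.
  apply Rlt_div_l; [apply Cmod_gt_0, Hd|]; rewrite Rmult_1_l.
  pose proof (Cmod_ge_0 (alpha - z)); pose proof (Cmod_ge_0 (1 - Cconj alpha * z)).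
  enough (Cmod (alpha - z) ^ 2 < Cmod (1 - Cconj alpha * z) ^ 2)%R by nra.
  assert (Ha2 := pow_lt_1_compat _ 2 (conj (Cmod_ge_0 _) Ha) ltac:(lia)).
  assert (Hz2 := pow_lt_1_compat _ 2 (conj (Cmod_ge_0 _) Hz) ltac:(lia)).
  rewrite Cmod2_alt in Ha2, Hz2 |- *; rewrite Cmod2_alt.
  destruct alpha as [a1 a2], z as [z1 z2]; simpl in *.
  assert (0 < (1 - (a1 ^ 2 + a2 ^ 2)) * (1 - (z1 ^ 2 + z2 ^ 2)))%R
    by (apply Rmult_lt_0_compat; lra).
  nra.
Qed.

Lemma phi_invol alpha z : Cmod alpha < 1 -> Cmod z < 1 -> phi alpha (phi alpha z) = z.
Proof.
  intros Ha Hz; pose proof (one_sub_conj_mul_neq0 alpha z Ha Hz) as Hd.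
  pose proof (one_sub_conj_mul_neq0 alpha alpha Ha Ha) as Hrho.
  assert (1 - Cconj alpha * z - Cconj alpha * (alpha - z) <> 0)
    by (intro E; apply Hrho; rewrite <- E; ring).
  unfold phi; field; auto.
Qed.

Lemma one_sub_conj_mul_phi alpha z :
  Cmod alpha < 1 -> Cmod z < 1 ->
  (1 - Cconj alpha * phi alpha z) * (1 - Cconj alpha * z) = 1 - Cconj alpha * alpha.
Proof.
  intros Ha Hz; pose proof (one_sub_conj_mul_neq0 alpha z Ha Hz).
  unfold phi; field; assumption.
Qed.

Lemma one_sub_conj_mul_phi_factor alpha w z :
  Cmod alpha < 1 -> Cmod w < 1 -> Cmod z < 1 ->
  (1 - Cconj w * phi alpha z) * (1 - Cconj alpha * z)
  = (1 - Cconj w * alpha) * (1 - Cconj (phi alpha w) * z).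
Proof.
  intros Ha Hw Hz.
  pose proof (one_sub_conj_mul_neq0 alpha z Ha Hz).
  pose proof (one_sub_conj_mul_neq0 alpha w Ha Hw) as Hw'.
  assert (1 - alpha * Cconj w <> 0)
    by (intro E; apply (one_sub_conj_mul_neq0 w alpha Hw Ha); rewrite <- E; ring).
  unfold phi; rewrite Cdiv_conj, !Cminus_conj, Cmult_conj, Cconj_conj, RtoC_conj by exact Hw'.
  field; auto.
Qed.

(** * The vectors [C_(phi alpha)^* z^n] *)

Lemma Cinv_pow_div (a c : C) N : a <> 0 -> c <> 0 -> / (a / c) ^ N = c ^ N / a ^ N.
Proof.
  intros Ha Hc; unfold Cdiv; rewrite Cpow_mult_l, Cpow_inv by exact Hc.
  pose proof (Cpow_nz a N Ha); pose proof (Cpow_nz c N Hc).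
  field; auto.
Qed.

Lemma is_series_kernel_comp_phi beta alpha w z :
  Cmod alpha < 1 -> Cmod w < 1 -> Cmod z < 1 ->
  Cis (fun j => / (1 - Cconj w * alpha) ^ S (beta + 1)
                * mul_1_sub_pow (Cconj alpha) (S (beta + 1)) (kernel beta (phi alpha w)) j
                * z ^ j)
      (/ (1 - Cconj w * phi alpha z) ^ S (beta + 1)).
Proof.
  intros Ha Hw Hz; set (N := S (beta + 1)).
  pose proof (phi_disc alpha w Ha Hw) as Hpw.
  pose proof (one_sub_conj_mul_neq0 alpha z Ha Hz) as Hden.
  pose proof (one_sub_conj_mul_neq0 w alpha Hw Ha).
  pose proof (one_sub_conj_mul_neq0 (phi alpha w) z Hpw Hz).
  replace (1 - Cconj w * phi alpha z)
    with ((1 - Cconj w * alpha) * (1 - Cconj (phi alpha w) * z) / (1 - Cconj alpha * z))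
    by (rewrite <- (one_sub_conj_mul_phi_factor alpha w z Ha Hw Hz); field; exact Hden).
  rewrite Cinv_pow_div, Cpow_mult_l by auto using Cmult_neq_0.
  replace (_ / _) with (/ (1 - Cconj w * alpha) ^ N
                        * ((1 - Cconj alpha * z) ^ N * / (1 - Cconj (phi alpha w) * z) ^ N))
    by (field; split; apply Cpow_nz; assumption).
  refine (Cis_ext _ _ _ _ (Cis_scal (/ (1 - Cconj w * alpha) ^ N) _ _
    (is_series_mul_1_sub_pow (Cconj alpha) N _ z _ (is_series_kernel beta _ z Hpw Hz)))).
  intro j; ring.
Qed.

Lemma eval_adj_mono beta alpha n v w :
  Cmod alpha < 1 -> is_adj_comp beta alpha (mono n) v -> Cmod w < 1 ->
  eval v w = wt beta n * / (1 - Cconj alpha * w) ^ S (beta + 1)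
             * mul_1_sub_pow alpha (S (beta + 1)) (negbin_seq (beta + 1) (phi alpha w)) n.
Proof.
  intros Ha [_ Hadj] Hw; set (N := S (beta + 1)).
  pose proof (phi_disc alpha w Ha Hw) as Hpw.
  pose proof (one_sub_conj_mul_neq0 w alpha Hw Ha) as Hnz.
  set (G := fun j => / (1 - Cconj w * alpha) ^ N
                     * mul_1_sub_pow (Cconj alpha) N (kernel beta (phi alpha w)) j).
  assert (HG : ip beta (kernel beta w) v = ip beta G (mono n)).
  { apply Hadj.
    - apply inA2_kernel, Hw.
    - apply inA2_scal, inA2_mul_1_sub_pow, inA2_kernel, Hpw.
    - intros z Hz.
      transitivity (/ (1 - Cconj w * phi alpha z) ^ N).
      + apply eval_is_series, is_series_kernel_comp_phi; assumption.
      + symmetry; apply eval_is_series, is_series_kernel; [|apply phi_disc]; assumption. }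
  rewrite ip_kernel, ip_mono in HG; apply (f_equal Cconj) in HG.
  rewrite Cconj_conj in HG; rewrite HG; unfold G.
  rewrite !Cmult_conj, RtoC_conj, Cinv_conj, Cpow_conj, Cconj_mul_1_sub_pow, Cconj_conj
    by (apply Cpow_nz, Hnz).
  rewrite (mul_1_sub_pow_ext _ _ _ _ (Cconj_kernel beta (phi alpha w))).
  rewrite Cminus_conj, Cmult_conj, Cconj_conj, RtoC_conj.
  replace (1 - w * Cconj alpha) with (1 - Cconj alpha * w) by ring; ring.
Qed.

Definition adj_mono_poly (beta : nat) (alpha : C) (n j : nat) : C :=
  if Nat.leb j n
  then coef_1_sub_pow alpha (S (beta + 1)) (n - j) * negbin (beta + 1) j
  else 0.

Definition comp_adj_mono (beta : nat) (alpha : C) (n : nat) (j : nat) : C :=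
  wt beta n / (1 - Cconj alpha * alpha) ^ S (beta + 1)
  * mul_1_sub_pow (Cconj alpha) (S (beta + 1)) (adj_mono_poly beta alpha n) j.

Lemma comp_adj_mono_support beta alpha n j :
  (j + S (beta + 1) < n)%nat \/ (n + S (beta + 1) < j)%nat -> comp_adj_mono beta alpha n j = 0.
Proof.
  intros Hj; unfold comp_adj_mono.
  rewrite (mul_1_sub_pow_support _ _ _ (n - S (beta + 1)) n); [ring| |lia].
  intros i Hi; unfold adj_mono_poly; destruct (Nat.leb_spec i n); [|reflexivity].
  rewrite coef_1_sub_pow_support by lia; ring.
Qed.

Lemma mul_1_sub_pow_negbin_seq beta alpha n z :
  mul_1_sub_pow alpha (S (beta + 1)) (negbin_seq (beta + 1) z) n
  = sum_n (fun j => adj_mono_poly beta alpha n j * z ^ j) n.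
Proof.
  rewrite mul_1_sub_pow_conv; apply sum_n_ext_loc; intros j Hj.
  unfold adj_mono_poly, negbin_seq; destruct (Nat.leb_spec j n); [apply Cmult_assoc | lia].
Qed.

Lemma eval_adj_mono_phi beta alpha n v z :
  Cmod alpha < 1 -> is_adj_comp beta alpha (mono n) v -> Cmod z < 1 ->
  eval v (phi alpha z)
  = wt beta n / (1 - Cconj alpha * alpha) ^ S (beta + 1)
    * ((1 - Cconj alpha * z) ^ S (beta + 1)
       * sum_n (fun j => adj_mono_poly beta alpha n j * z ^ j) n).
Proof.
  intros Ha Hv Hz.
  rewrite (eval_adj_mono beta alpha n v _ Ha Hv (phi_disc alpha z Ha Hz)).
  rewrite (mul_1_sub_pow_ext _ _ _ (negbin_seq (beta + 1) z))
    by (rewrite phi_invol by assumption; reflexivity).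
  rewrite mul_1_sub_pow_negbin_seq.
  pose proof (one_sub_conj_mul_neq0 alpha z Ha Hz) as Hden.
  pose proof (one_sub_conj_mul_neq0 alpha alpha Ha Ha) as Hrho.
  replace (1 - Cconj alpha * phi alpha z)
    with ((1 - Cconj alpha * alpha) / (1 - Cconj alpha * z))
    by (rewrite <- (one_sub_conj_mul_phi alpha z Ha Hz); field; exact Hden).
  rewrite Cinv_pow_div by assumption.
  field; apply Cpow_nz; exact Hrho.
Qed.

Lemma eval_comp_adj_mono beta alpha n v z :
  Cmod alpha < 1 -> is_adj_comp beta alpha (mono n) v -> Cmod z < 1 ->
  eval (comp_adj_mono beta alpha n) z = eval v (phi alpha z).
Proof.
  intros Ha Hv Hz; rewrite (eval_adj_mono_phi beta alpha n v z Ha Hv Hz).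
  apply eval_is_series.
  refine (Cis_ext _ _ _ _ (Cis_scal (wt beta n / (1 - Cconj alpha * alpha) ^ S (beta + 1)) _ _
    (is_series_mul_1_sub_pow (Cconj alpha) (S (beta + 1)) _ z _
      (is_series_poly (adj_mono_poly beta alpha n) z n _)))).
  - intro j; unfold comp_adj_mono; ring.
  - intros j Hj; unfold adj_mono_poly; destruct (Nat.leb_spec j n); [lia | reflexivity].
Qed.

Local Close Scope C_scope.

Theorem lemma5p5 (beta : nat) (alpha : C) (n m : nat) (vn vm : nat -> C) :
  alpha <> RtoC 0 -> Cmod alpha < 1 ->
  is_adj_comp beta alpha (mono n) vn ->
  is_adj_comp beta alpha (mono m) vm ->
  (n + beta + 3 <= m)%nat \/ (m + beta + 3 <= n)%nat ->
  ip beta vn vm = RtoC 0.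
Proof.
  intros _ Ha Hvn [_ Hvm] Hnm.
  rewrite (Hvm vn (comp_adj_mono beta alpha n)).
  - rewrite ip_mono, comp_adj_mono_support by lia; apply Cmult_0_r.
  - exact (proj1 Hvn).
  - apply (inA2_finite _ _ (n + S (beta + 1))); intros j Hj.
    apply comp_adj_mono_support; lia.
  - intros z Hz; apply eval_comp_adj_mono; assumption.
Qed.
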